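(* Let $H$ be a fixed graph, $p\in[0,1)$, and let $G$ be an online graph together with an arbitrary sequence of advice bits $u_1(G),u_2(G),\dots\in\{0,1\}$, such that $G$ is not $H$-free. Run $\mathrm{ALG}_p$ on $G$ with this advice (with arbitrary choices among simultaneously appearing copies of $H$), and let $\tilde d,\tilde e$ be the final values of the counters $d,e$. If $\tilde d+\tilde e>0$, then $$\frac{\tilde d}{\tilde e+\tilde d}\le (1-p)+\frac{1}{\tilde e+\tilde d}.$$
   Context: All graphs are finite, simple and undirected. An induced copy of $H$ in $G$ is an induced subgraph of $G$ isomorphic to $H$; $G$ is $H$-free if it has no induced copy of $H$. An online graph $G$ has its vertices $v_1,\dots,v_n$ revealed one at a time (each together with its edges to previously revealed vertices); with predictions, when $v_t$ is revealed the algorithm also receives one bit $u_t(G)\in\{0,1\}$. Algorithm $\mathrm{ALG}_p$ (parameter $p\in[0,1)$, $k=|V(H)|$): it maintains counters $d$ and $e$, initially $0$. Deleted vertices are removed permanently. After each vertex is revealed, as long as the current remaining graph contains an induced copy of $H$, it picks one such copy (arbitrarily) and applies the first applicable case: (Case 1) If the copy contains no vertex with advice bit $1$ (or such a copy has appeared at some earlier point), then from now on the algorithm deletes all vertices of every copy of $H$ that appears, without changing $d$ or $e$. (Case 2) Else, if $d=0$ or $e/(e+d)>p$: delete all $k$ vertices of the copy and increase $d$ by $1$. (Case 3) Else: delete one vertex of the copy with advice bit $1$ (the earliest-revealed such vertex) and increase $e$ by $1$. This is repeated until the remaining graph is $H$-free, before the next vertex is revealed. *)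

From mathcomp Require Import all_boot all_order all_algebra.
Import Order.TTheory GRing.Theory Num.Theory.
Local Open Scope ring_scope.
Set Implicit Arguments. Unset Strict Implicit. Unset Printing Implicit Defensive.

(* Graphs: a simple graph on a finType T is a symmetric irreflexive rel T.
   The online graph G has vertex set 'I_n, vertex i being v_{i+1}, revealed
   in the order of indices. *)

Definition induced_copy (VH : finType) (hE : rel VH) (n : nat) (gE : rel 'I_n)
  (C : {set 'I_n}) : Prop :=
  exists f : VH -> 'I_n,
    injective f /\ f @: [set: VH] = C /\ (forall x y, hE x y = gE (f x) (f y)).

Definition H_free_on (VH : finType) (hE : rel VH) (n : nat) (gE : rel 'I_n)
  (S : {set 'I_n}) : Prop :=
  forall C : {set 'I_n}, C \subset S -> ~ induced_copy hE gE C.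

(* State of ALG_p: number of revealed vertices, current remaining vertex set,
   counters d and e, and the Case-1 flag ("from now on delete all copies"). *)
Record alg_state (n : nat) := AlgState {
  revealed : nat;
  remaining : {set 'I_n};
  dcount : nat;
  ecount : nat;
  case1_mode : bool }.

Definition alg_init (n : nat) : alg_state n := @AlgState n 0 set0 0 0 false.

Inductive alg_step (R : realFieldType) (p : R) (VH : finType) (hE : rel VH)
  (n : nat) (gE : rel 'I_n) (u : 'I_n -> bool) :
  alg_state n -> alg_state n -> Prop :=
| step_reveal (t : nat) (Ht : (t < n)%N) (S : {set 'I_n}) (d e : nat) (b : bool) :
    H_free_on hE gE S ->
    @alg_step R p VH hE n gE u (@AlgState n t S d e b)
                       (@AlgState n t.+1 (S :|: [set Ordinal Ht]) d e b)
| step_case1 (t : nat) (S : {set 'I_n}) (d e : nat) (b : bool) (C : {set 'I_n}) :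
    C \subset S -> induced_copy hE gE C ->
    (b || [forall v in C, ~~ u v]) ->
    @alg_step R p VH hE n gE u (@AlgState n t S d e b)
                       (@AlgState n t (S :\: C) d e true)
| step_case2 (t : nat) (S : {set 'I_n}) (d e : nat) (b : bool) (C : {set 'I_n}) :
    C \subset S -> induced_copy hE gE C ->
    ~~ (b || [forall v in C, ~~ u v]) ->
    ((d == 0)%N || (p < e%:R / (e + d)%:R)) ->
    @alg_step R p VH hE n gE u (@AlgState n t S d e b)
                       (@AlgState n t (S :\: C) d.+1 e b)
| step_case3 (t : nat) (S : {set 'I_n}) (d e : nat) (b : bool) (C : {set 'I_n}) (v : 'I_n) :
    C \subset S -> induced_copy hE gE C ->
    ~~ (b || [forall v in C, ~~ u v]) ->
    ~~ ((d == 0)%N || (p < e%:R / (e + d)%:R)) ->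
    v \in C -> u v -> (forall w, w \in C -> u w -> (v <= w)%N) ->
    @alg_step R p VH hE n gE u (@AlgState n t S d e b)
                       (@AlgState n t (S :\ v) d e.+1 b).

Inductive alg_reach (R : realFieldType) (p : R) (VH : finType) (hE : rel VH)
  (n : nat) (gE : rel 'I_n) (u : 'I_n -> bool) :
  alg_state n -> alg_state n -> Prop :=
| reach_refl s : @alg_reach R p VH hE n gE u s s
| reach_step s1 s2 s3 :
    @alg_step R p VH hE n gE u s1 s2 -> @alg_reach R p VH hE n gE u s2 s3 ->
    @alg_reach R p VH hE n gE u s1 s3.

From mathcomp Require Import all_boot all_order all_algebra.
From mathcomp Require Import lra.
Import Order.TTheory GRing.Theory Num.Theory.
Local Open Scope ring_scope.
Set Implicit Arguments. Unset Strict Implicit. Unset Printing Implicit Defensive.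

(* The potential [p d - (1 - p) e] never exceeds 1.  A Case-3 step lowers it,
   and a Case-2 step is only taken when [d = 0] or [e / (e + d) > p], i.e.
   when the potential is at most 0, so afterwards it is at most [p < 1].
   Dividing [p d - (1 - p) e <= 1] by [e + d] gives the bound. *)

Section CounterPotential.

Variables (R : realFieldType) (p : R).
Hypotheses (p_ge0 : 0 <= p) (p_lt1 : p < 1).

Definition potential_bounded (d e : nat) : Prop :=
  p * d%:R - (1 - p) * e%:R <= 1.

Lemma potential_bounded0 : potential_bounded 0 0.
Proof. by rewrite /potential_bounded !mulr0 subr0 ler01. Qed.

Lemma potential_bounded_incr_d (d e : nat) :
  ((d == 0)%N || (p < e%:R / (e + d)%:R)) -> potential_bounded d.+1 e.
Proof.
rewrite /potential_bounded; have e_ge0 : 0 <= e%:R :> R by [].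
have ep_ge0 : 0 <= (1 - p) * e%:R by rewrite mulr_ge0 // subr_ge0 ltW.
case: d => [_|d /= p_lt]; first by rewrite mulr1; move: ep_ge0 p_lt1; lra.
have d_ge0 : 0 <= d%:R :> R by [].
move: p_lt; rewrite ltr_pdivlMr; last by rewrite ltr0n addnS.
rewrite natrD -!natr1.
by move: p_lt1 p_ge0; nra.
Qed.

Lemma potential_bounded_incr_e (d e : nat) :
  potential_bounded d e -> potential_bounded d e.+1.
Proof. by rewrite /potential_bounded -natr1; move: p_lt1; lra. Qed.

Lemma potential_bounded_ratio (d e : nat) :
  (0 < d + e)%N -> potential_bounded d e ->
  d%:R / (e + d)%:R <= (1 - p) + 1 / (e + d)%:R.
Proof.
move=> de_gt0 bounded; have ed_gt0 : 0 < (e + d)%:R :> R by rewrite ltr0n addnC.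
rewrite -(ler_pM2r ed_gt0) mulfVK ?gt_eqF // mulrDl div1r mulVf ?gt_eqF //.
by move: bounded; rewrite /potential_bounded natrD; lra.
Qed.

Variables (VH : finType) (hE : rel VH) (n : nat) (gE : rel 'I_n) (u : 'I_n -> bool).

Definition state_potential_bounded (s : alg_state n) : Prop :=
  potential_bounded (dcount s) (ecount s).

Lemma alg_step_potential (s1 s2 : alg_state n) :
  alg_step p hE gE u s1 s2 ->
  state_potential_bounded s1 -> state_potential_bounded s2.
Proof.
case=> //= [t S d e b C _ _ _ case2 _|t S d e b C v *].
- exact: potential_bounded_incr_d case2.
- exact: potential_bounded_incr_e.
Qed.

Lemma alg_reach_potential (s1 s2 : alg_state n) :
  alg_reach p hE gE u s1 s2 ->
  state_potential_bounded s1 -> state_potential_bounded s2.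
Proof. by elim=> // s s' s'' /alg_step_potential step _ IH /step. Qed.

End CounterPotential.

Theorem mainTheorem2 (R : realFieldType) (p : R) (VH : finType) (hE : rel VH)
  (n : nat) (gE : rel 'I_n) (u : 'I_n -> bool) (s : alg_state n) :
  symmetric hE -> irreflexive hE -> symmetric gE -> irreflexive gE ->
  0 <= p -> p < 1 ->
  (exists C : {set 'I_n}, induced_copy hE gE C) ->
  alg_reach p hE gE u (alg_init n) s ->
  revealed s = n -> H_free_on hE gE (remaining s) ->
  (0 < dcount s + ecount s)%N ->
  (dcount s)%:R / (ecount s + dcount s)%:R
    <= (1 - p) + 1 / (ecount s + dcount s)%:R.
Proof.
move=> _ _ _ _ p_ge0 p_lt1 _ run _ _ de_gt0.
apply: potential_bounded_ratio de_gt0 _.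
exact: (alg_reach_potential p_ge0 p_lt1 run (potential_bounded0 p)).
Qed.
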